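(* Let $G$ be a finite connected graph with node set $V$ and let $r$ be a ranking of $V$. Algorithm 1 (described in the context) run on $G$ and $r$ terminates and outputs a value, a node $c$ and a set $L$ such that the value equals $\operatorname{rad}(G)$, $e(c)=\operatorname{rad}(G)$ (i.e. $c$ is a center), and $L$ is a radius certificate with $L\subseteq A_r(V)$. It performs at most $2|L|+1$ one-to-all distance queries; in particular $O(|A_r(V)|)$ queries.
   Context: $G$ is undirected, unweighted, connected with finite node set $V$; $d$ is the shortest-path distance, $e(u)=\max_v d(u,v)$, $\operatorname{rad}(G)=\min_u e(u)$. A ranking $r$ is an injective map from $V$ to a totally ordered set; the antipode $A_r(u)$ is the node $v$ maximizing $(d(u,v),r(v))$ lexicographically, and $A_r(W)=\{A_r(u):u\in W\}$. A one-to-all distance query from $x$ computes $(d(x,v))_{v\in V}$. For $L\subseteq V$ let $e_L(v)=\max_{x\in L}d(v,x)$ ($=0$ if $L=\emptyset$). A radius certificate is a set $L$ with $e_L(v)\ge\operatorname{rad}(G)$ for all $v\in V$. Algorithm 1: start with $L=K=\emptyset$. Repeat iterations: (1) select $u\in V$ with $e_L(u)$ minimal (ties arbitrary); (2) query from $u$ and compute $e(u)$; (3) if $e(u)=e_L(u)$, halt and output $e(u)$, $u$, $L$; (4) otherwise let $a=A_r(u)$, query from $a$, add $u$ to $K$ and $a$ to $L$ and update $e_L$. After each iteration not halting in (3), if $\min_{v\in V}e_L(v)\ge\min_{w\in K}e(w)$, halt and output $e(c)$, $c$, $L$ where $c\in K$ minimizes $e$ over $K$; otherwise start a new iteration. 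*)

From mathcomp Require Import all_boot all_order.
Set Implicit Arguments. Unset Strict Implicit. Unset Printing Implicit Defensive.
Import Order.TTheory.

Section Graph.
Variables (T : finType) (e : rel T).

Fixpoint ball (u : T) (n : nat) : {set T} :=
  if n is n'.+1 then ball u n' :|: [set y | [exists x in ball u n', e x y]]
  else [set u].

(* shortest-path distance: least n with v within n steps of u
   (for a connected graph this is always < #|T|) *)
Definition dist (u v : T) : nat := find (fun n => v \in ball u n) (iota 0 #|T|).

Definition ecc (u : T) : nat := \max_(v : T) dist u v.

(* minimum of f over the x satisfying P; the neutral element #|T| is an
   upper bound of every distance/eccentricity in a connected graph, so on a
   nonempty range this is the genuine minimum *)
Definition minover (P : pred T) (f : T -> nat) : nat :=
  \big[minn/#|T|]_(x | P x) f x.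

Definition rad : nat := minover predT ecc.

Definition eL (L : {set T}) (v : T) : nat := \max_(x in L) dist v x.

Definition radius_certificate (L : {set T}) : Prop := forall v, rad <= eL L v.

Variables (disp : Order.disp_t) (R : orderType disp) (r : T -> R).

Definition is_antipode (u a : T) : bool :=
  [forall v, (dist u v < dist u a) || ((dist u v == dist u a) && (r v <= r a)%O)].

(* A_r(u) (unique when r is injective; default u never used) *)
Definition antipode (u : T) : T := odflt u [pick a | is_antipode u a].

Definition antipodes_all : {set T} := [set antipode u | u in T].

(* Algorithm 1 as a (nondeterministic in the tie-breaking) transition system.
   Running L K q : between iterations, q = number of distance queries so far.
   Halted val c L q : output (val, c, L) after q queries. *)
Inductive config :=
| Running of {set T} & {set T} & nat
| Halted of nat & T & {set T} & nat.

Inductive step : config -> config -> Prop :=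
| step_halt3 L K q u :
    (forall v, eL L u <= eL L v) ->
    ecc u = eL L u ->                         (* (2),(3): one query *)
    step (Running L K q) (Halted (ecc u) u L q.+1)
| step_continue L K q u :
    (forall v, eL L u <= eL L v) ->
    ecc u <> eL L u ->
    (* (4): one more query; L' = a |: L, K' = u |: K; check fails *)
    ~ (minover (mem (u |: K)) ecc <= minover predT (eL (antipode u |: L))) ->
    step (Running L K q) (Running (antipode u |: L) (u |: K) q.+2)
| step_halt_check L K q u c :
    (forall v, eL L u <= eL L v) ->
    ecc u <> eL L u ->
    minover (mem (u |: K)) ecc <= minover predT (eL (antipode u |: L)) ->
    c \in u |: K ->
    (forall w, w \in u |: K -> ecc c <= ecc w) ->
    step (Running L K q) (Halted (ecc c) c (antipode u |: L) q.+2).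

Definition init : config := Running set0 set0 0.

Inductive reachable : config -> Prop :=
| reach_init : reachable init
| reach_step x y : reachable x -> step x y -> reachable y.

End Graph.

(* Since e_L <= e pointwise, min_v e_L(v) <= rad(G).  Hence if some node c
   satisfies e(c) <= min_v e_L(v), then c is a center and L is a radius
   certificate; both halting tests of the algorithm produce such a c (for the
   first, c = u minimizes e_L and e(u) = e_L(u)).  When an iteration does not
   halt, the antipode a of u has d(u,a) = e(u) > e_L(u), so a is not yet in L:
   every non-halting iteration adds a new node of A_r(V) to L at the price of
   two queries.  This bounds the number of iterations, and gives q = 2|L|
   while running and q <= 2|L| + 1 on output. *)

From HB Require Import structures.
From Stdlib Require Import Wf_nat Inclusion.
From mathcomp Require Import all_boot all_order.
Set Implicit Arguments. Unset Strict Implicit. Unset Printing Implicit Defensive.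

(* [minn] has no unit on [nat], but [bigD1] only needs an AC law. *)
HB.instance Definition _ := SemiGroup.isComLaw.Build nat minn minnA minnC.

Section Eccentricity.
Variables (T : finType) (e : rel T).

Lemma dist_le_card u v : dist e u v <= #|T|.
Proof.
have := find_size (fun n => v \in ball e u n) (iota 0 #|T|).
by rewrite size_iota.
Qed.

Lemma dist_le_ecc u v : dist e u v <= ecc e u.
Proof. exact: (leq_bigmax (F := dist e u)). Qed.

Lemma ecc_le_card u : ecc e u <= #|T|.
Proof. by apply/bigmax_leqP => v _; apply: dist_le_card. Qed.

Lemma dist_le_eL (L : {set T}) u x : x \in L -> dist e u x <= eL e L u.
Proof. exact: (leq_bigmax_cond (F := dist e u)). Qed.

Lemma eL_le_ecc (L : {set T}) u : eL e L u <= ecc e u.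
Proof. by apply/bigmax_leqP => v _; apply: dist_le_ecc. Qed.

Lemma minover_le (P : pred T) f i : P i -> minover P f <= f i.
Proof. by move=> Pi; rewrite /minover (bigD1 i) //= geq_minl. Qed.

Lemma le_minover (P : pred T) f m :
  m <= #|T| -> (forall i, P i -> m <= f i) -> m <= minover P f.
Proof.
move=> mT mf; apply: (big_ind (leq m)) => // x y mx my.
by rewrite leq_min mx my.
Qed.

Lemma minover_le_mono (f g : T -> nat) :
  (forall i, f i <= g i) -> minover predT f <= minover predT g.
Proof.
move=> fg; apply: (big_ind2 leq) => // x1 x2 y1 y2 le1 le2.
by rewrite leq_min !geq_min le1 le2 orbT.
Qed.

Lemma rad_le_ecc c : rad e <= ecc e c.
Proof. exact: minover_le. Qed.

Lemma certified_center (L : {set T}) c :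
  ecc e c <= minover predT (eL e L) -> ecc e c = rad e /\ radius_certificate e L.
Proof.
move=> c_low.
have c_rad : ecc e c = rad e.
  apply/eqP; rewrite eqn_leq rad_le_ecc andbT.
  exact: leq_trans c_low (minover_le_mono (eL_le_ecc L)).
by split=> // v; rewrite -c_rad (leq_trans c_low) ?minover_le.
Qed.

End Eccentricity.

Section Antipode.
Variables (T : finType) (e : rel T).
Variables (disp : Order.disp_t) (R : orderType disp) (r : T -> R).

Lemma is_antipode_exists u : exists a, is_antipode e r u a.
Proof.
have T_gt0 : 0 < #|T| by apply/card_gt0P; exists u.
have [v ecc_v] := eq_bigmax (dist e u) T_gt0.
pose far := [pred w | dist e u w == ecc e u].
have far_v : far v by rewrite /far /= /ecc ecc_v.
have [a /eqP far_a a_max] := Order.TotalTheory.arg_maxP r far_v.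
exists a; apply/forallP => w; rewrite far_a ltn_neqAle dist_le_ecc andbT.
by case: eqP => //= far_w; apply: a_max; apply/eqP.
Qed.

Lemma dist_antipode u : dist e u (antipode e r u) = ecc e u.
Proof.
rewrite /antipode; case: pickP => [a /forallP a_anti | no_anti] /=.
  apply/eqP; rewrite eqn_leq dist_le_ecc; apply/bigmax_leqP => v _.
  by case/orP: (a_anti v) => [/ltnW | /andP[/eqP-> _]].
by have [a] := is_antipode_exists u; rewrite no_anti.
Qed.

Lemma antipode_notin (L : {set T}) u :
  ecc e u <> eL e L u -> antipode e r u \notin L.
Proof.
move=> ecc_neq; apply/negP => aL; apply: ecc_neq; apply/eqP.
by rewrite eqn_leq eL_le_ecc andbT -{1}(dist_antipode u) dist_le_eL.
Qed.

Lemma card_antipode_setU (L : {set T}) u :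
  ecc e u <> eL e L u -> #|antipode e r u |: L| = #|L|.+1.
Proof. by move=> /antipode_notin aL; rewrite cardsU1 aL. Qed.

Lemma antipode_setU_sub (L : {set T}) u :
  L \subset antipodes_all e r -> antipode e r u |: L \subset antipodes_all e r.
Proof. by move=> L_sub; rewrite subUset L_sub sub1set imset_f. Qed.

End Antipode.

Section Algorithm.
Variables (T : finType) (e : rel T).
Variables (disp : Order.disp_t) (R : orderType disp) (r : T -> R).

Local Notation step := (step e r).

Definition fuel (x : config T) : nat :=
  if x is Running L _ _ then (#|T| - #|L|).+1 else 0.

Lemma fuel_step x y : step x y -> fuel y < fuel x.
Proof.
case=> //= L K q u _ ecc_neq _; rewrite ltnS card_antipode_setU //.
by rewrite ltn_sub2l // -(card_antipode_setU r ecc_neq) max_card.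
Qed.

Lemma step_acc x : Acc (fun y x => step x y) x.
Proof.
apply: (@Acc_incl _ _ (ltof _ fuel)); last exact: well_founded_ltof.
by move=> y z /fuel_step /ltP.
Qed.

Lemma running_step (L K : {set T}) q :
  0 < #|T| -> exists y, step (Running L K q) y.
Proof.
move=> /card_gt0P [i0 _].
have [u _ u_min] := arg_minnP (eL e L) (isT : predT i0).
have {}u_min v : eL e L u <= eL e L v by exact: u_min.
have [ecc_eq | /eqP ecc_neq] := eqVneq (ecc e u) (eL e L u).
  by eexists; apply: step_halt3 ecc_eq.
have [check | /negP check] :=
  boolP (minover (mem (u |: K)) (ecc e) <= minover predT (eL e (antipode e r u |: L))).
  have [c c_in c_min] := arg_minnP (ecc e) (setU11 u K).
  by eexists; apply: step_halt_check check c_in c_min.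
by eexists; apply: step_continue check.
Qed.

Definition config_invariant (x : config T) : Prop :=
  match x with
  | Running L _ q => q = 2 * #|L| /\ L \subset antipodes_all e r
  | Halted val c L q =>
      [/\ val = rad e, ecc e c = rad e, radius_certificate e L,
          L \subset antipodes_all e r & q <= 2 * #|L| + 1]
  end.

Lemma config_invariant_step x y :
  config_invariant x -> step x y -> config_invariant y.
Proof.
move=> inv_x st; case: st inv_x => [L K q u u_min ecc_eq | L K q u _ ecc_neq _
  | L K q u c _ ecc_neq check _ c_min] /= [-> L_sub].
- have u_low : ecc e u <= minover predT (eL e L).
    by apply: le_minover => [|v _]; rewrite ?ecc_le_card // ecc_eq u_min.
  by have [u_rad L_cert] := certified_center u_low; rewrite addn1.
- by rewrite card_antipode_setU // mulnS antipode_setU_sub.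
- have c_low : ecc e c <= minover predT (eL e (antipode e r u |: L)).
    by apply: leq_trans check; apply: le_minover => [|w /c_min //]; apply: ecc_le_card.
  have [c_rad L_cert] := certified_center c_low.
  by rewrite card_antipode_setU // mulnS addn1 antipode_setU_sub.
Qed.

Lemma reachable_invariant x : reachable e r x -> config_invariant x.
Proof.
elim=> [|x' y _ inv_x' st]; last exact: config_invariant_step st.
by rewrite /= cards0 sub0set.
Qed.

End Algorithm.

Theorem theorem3 (T : finType) (e : rel T)
  (e_sym : symmetric e) (e_irr : irreflexive e)
  (T_nonempty : 0 < #|T|)
  (connected : forall u v : T, connect e u v)
  (disp : Order.disp_t) (R : orderType disp) (r : T -> R) (r_inj : injective r) :
  (* termination: no infinite run *)
  Acc (fun y x => step e r x y) (init T)
  (* progress: a non-halted reachable configuration can always move *)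
  /\ (forall L K q, reachable e r (Running L K q) -> exists y, step e r (Running L K q) y)
  (* correctness and query bound of every output *)
  /\ (forall val c L q, reachable e r (Halted val c L q) ->
        [/\ val = rad e, ecc e c = rad e, radius_certificate e L,
            L \subset antipodes_all e r
          & q <= 2 * #|L| + 1 /\ q <= 2 * #|antipodes_all e r| + 1]).
Proof.
(* [dist] is capped at [#|T|] by definition and a total order always has
   antipodes. *)
split; first exact: step_acc.
split=> [L K q _ | val c L q /reachable_invariant [-> c_rad L_cert L_sub q_le]].
  exact: running_step.
split=> //; split=> //.
by rewrite (leq_trans q_le) // leq_add2r leq_mul2l subset_leq_card ?orbT.
Qed.
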